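(* If a digraph $H$ has tree duality, then its arc graph $\delta H$ also has tree duality.
   Context: Digraphs are finite, $G=(V,A)$ with $A\subseteq V\times V$; homomorphisms are arc-preserving vertex maps. A set $\mathcal F$ of digraphs is a complete set of obstructions for $H$ if for every digraph $G$: $G\to H$ iff no $F\in\mathcal F$ admits a homomorphism to $G$. $H$ has tree duality if it has a complete set of obstructions consisting of oriented trees (digraphs whose underlying undirected graph is a tree). The arc graph of $G=(V,A)$ is $\delta G=(A,\delta A)$ with $\delta A=\{((u,v),(v,w)) : (u,v),(v,w)\in A\}$. *)

From HB Require Import structures.
From mathcomp Require Import all_boot.
Set Implicit Arguments. Unset Strict Implicit. Unset Printing Implicit Defensive.

Record digraph := Digraph { dvert :> finType; darc : rel dvert }.
Arguments darc : clear implicits.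

Definition hom (G H : digraph) : Prop :=
  exists f : G -> H, forall u v : G, darc G u v -> darc H (f u) (f v).

Definition uadj (G : digraph) : rel G := fun u v => darc G u v || darc G v u.

Definition oriented_tree (T : digraph) : Prop :=
  [/\ 0 < #|T|,
      (forall u : T, ~~ darc T u u),
      (forall u v : T, darc T u v -> ~~ darc T v u),
      (forall u v : T, connect (uadj (G:=T)) u v)
    & (forall s : seq T, 3 <= size s -> uniq s -> ~~ cycle (uadj (G:=T)) s)].

Definition complete_obstructions (Fs : digraph -> Prop) (H : digraph) : Prop :=
  forall G : digraph, hom G H <-> ~ (exists F, Fs F /\ hom F G).

Definition tree_duality (H : digraph) : Prop :=
  exists Fs : digraph -> Prop,
    (forall F, Fs F -> oriented_tree F) /\ complete_obstructions Fs H.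

Definition arc_type (G : digraph) : finType :=
  {p : G * G | darc G p.1 p.2}.

Definition arc_graph (G : digraph) : digraph :=
  @Digraph (arc_type G) (fun a b => (val a).2 == (val b).1).

(* The proof goes through the power graph P(H), whose vertices are the
   nonempty vertex sets of H (see [power_graph]), and the classical
   characterisation: H has tree duality iff P(H) -> H.
   - Every oriented tree mapping to P(H) maps to H, built vertex by vertex
     along the tree ([tree_to_power_graph]); hence tree duality gives
     P(H) -> H, as an obstruction tree mapping to P(H) would map to H.
   - Conversely, if P(K) -> K, then every G all of whose "tree shadows"
     map to K maps to K: to a vertex v of G assign the set of images of v
     under all maps to K of the unfolding trees of G at v; a compactness
     argument over the finite K shows these sets are nonempty and form a
     homomorphism G -> P(K) ([hom_of_tree_homs]).  Thus the trees not
     mapping to K are a complete set of obstructions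
     ([power_hom_tree_duality]).
   - Finally P(H) -> H yields P(δH) -> δH by sending a set of arcs to the
     arc (φ(tails), φ(heads)) ([arc_graph_power_hom]). *)
From mathcomp Require Import all_boot.
From Stdlib Require Import Classical ClassicalEpsilon.
Set Implicit Arguments. Unset Strict Implicit. Unset Printing Implicit Defensive.

Lemma uadj_sym (G : digraph) : symmetric (uadj (G:=G)).
Proof. by move=> x y; rewrite /uadj orbC. Qed.

(* A graph in which every undirected edge joins a vertex to its designated
   parent, of strictly smaller rank, has no cycle: on a cycle, a vertex of
   maximal rank would have both cycle neighbours equal to its parent. *)
Lemma parent_rank_acyclic (G : digraph) (rank : G -> nat) (parent : G -> G) :
  (forall x y, uadj x y ->
     (y = parent x /\ rank y < rank x) \/ (x = parent y /\ rank x < rank y)) ->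
  forall s : seq G, 3 <= size s -> uniq s -> ~~ cycle (uadj (G:=G)) s.
Proof.
move=> edge_parent [//|x0 s0] size_s uniq_s; apply/negP => cycle_s.
have [x x_s rank_max] := arg_maxnP rank (mem_head x0 s0).
have [i s' rot_s] := rot_to x_s.
have : cycle (uadj (G:=G)) (x :: s') by rewrite -rot_s rot_cycle.
have : uniq (x :: s') by rewrite -rot_s rot_uniq.
have : 3 <= size (x :: s') by rewrite -rot_s size_rot.
have in_s y : y \in x :: s' -> rank y <= rank x.
  by rewrite -rot_s mem_rot => /rank_max.
case: s' rot_s in_s => [|a [|c t]] // _ in_s _ /and3P[_ a_t _].
rewrite /= rcons_path => /and4P[x_a _ _ last_x].
have b_t : last c t \in c :: t by apply: mem_last.
have below y : y \in c :: t -> rank y <= rank x.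
  by move=> y_t; apply: in_s; rewrite 2!in_cons y_t !orbT.
have a_parent : a = parent x.
  case: (edge_parent _ _ x_a) => [[]//|[_]].
  by rewrite ltnNge in_s // !inE eqxx orbT.
have last_parent : last c t = parent x.
  case: (edge_parent _ _ last_x) => [[_]|[]//].
  by rewrite ltnNge below.
by move: a_t; rewrite a_parent -last_parent b_t.
Qed.

Lemma exit_edge (T : finType) (e : rel T) (D : {set T}) (x : T) (p : seq T) :
  x \in D -> path e x p -> last x p \notin D ->
  exists d u, [/\ d \in D, u \notin D & e d u].
Proof.
elim: p x => [|y p IH] x x_D /=; first by rewrite x_D.
case/andP=> e_xy y_p last_p.
have [y_D|y_D] := boolP (y \in D); first exact: IH y_p last_p.
by exists x, y; split.
Qed.

Definition induced (T : finType) (e : rel T) (D : {set T}) : rel T :=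
  [rel x y | [&& x \in D, y \in D & e x y]].

Lemma induced_path_in (T : finType) (e : rel T) (D : {set T}) x p :
  path (induced e D) x p -> all (mem D) p.
Proof. by elim: p x => //= y p IH x /andP[/and3P[_ -> _] /IH]. Qed.

(* In a graph without cycles, a vertex outside a connected set D has at most
   one neighbour in D: two neighbours d, d' would close a cycle through a
   simple path from d to d' inside D. *)
Lemma acyclic_attach_unique (G : digraph) (D : {set G}) (u d d' : G) :
  (forall s : seq G, 3 <= size s -> uniq s -> ~~ cycle (uadj (G:=G)) s) ->
  {in D &, forall x y, connect (induced (uadj (G:=G)) D) x y} ->
  u \notin D -> d \in D -> d' \in D -> uadj u d -> uadj u d' -> d' = d.
Proof.
move=> acyclic D_conn u_D d_D d'_D u_d u_d'; apply/eqP/negP => d'_neq_d.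
case/connectP: (D_conn d d' d_D d'_D) => p d_p.
case: (shortenP d_p) => q d_q uniq_dq _ last_q.
have q_D : all (mem D) q by apply: induced_path_in d_q.
have q_ne : q != [::] by apply/eqP => q0; apply: d'_neq_d; rewrite last_q q0.
have size3 : 3 <= size (u :: d :: q) by case: q q_ne {d_q uniq_dq last_q q_D}.
have uniq_udq : uniq (u :: d :: q).
  by rewrite cons_uniq uniq_dq andbT; apply: contra u_D => /predU1P[->|/(allP q_D)].
have cycle_udq : cycle (uadj (G:=G)) (u :: d :: q).
  rewrite /= rcons_path u_d -last_q uadj_sym u_d' andbT.
  by apply: sub_path d_q => x y /and3P[].
by rewrite (negbTE (acyclic _ size3 uniq_udq)) in cycle_udq.
Qed.

Definition nonempty_set (H : digraph) : finType := {X : {set H} | X != set0}.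

Definition power_graph (H : digraph) : digraph :=
  @Digraph (nonempty_set H) (fun X Y =>
    [forall a in val X, exists b in val Y, darc H a b] &&
    [forall b in val Y, exists a in val X, darc H a b]).

Lemma power_arc_succ (H : digraph) (X Y : power_graph H) (a : H) :
  darc _ X Y -> a \in val X -> exists2 b, b \in val Y & darc H a b.
Proof.
by case/andP=> /forall_inP/(_ a)+ _ a_X => /(_ a_X)/exists_inP[b]; exists b.
Qed.

Lemma power_arc_pred (H : digraph) (X Y : power_graph H) (b : H) :
  darc _ X Y -> b \in val Y -> exists2 a, a \in val X & darc H a b.
Proof.
by case/andP=> _ /forall_inP/(_ b)+ b_Y => /(_ b_Y)/exists_inP[a]; exists a.
Qed.

(* A homomorphism is
   built by choosing g x in f x on a growing connected set D of vertices: a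
   new vertex u attaches to D through a unique neighbour d (T has no cycles),
   and the arc f d -- f u of P(H) offers a suitable value in f u. *)
Section TreeToPowerGraph.
Variables (T H : digraph) (f : T -> power_graph H).
Hypothesis f_hom : forall u v, darc T u v -> darc _ (f u) (f v).
Hypothesis loopless : forall u : T, ~~ darc T u u.

Definition partial_choice (D : {set T}) (g : T -> H) : Prop :=
  [/\ {in D, forall x, g x \in val (f x)},
      {in D &, forall x y, darc T x y -> darc H (g x) (g y)}
    & {in D &, forall x y, connect (induced (uadj (G:=T)) D) x y}].

Lemma partial_choice1 (r : T) : exists g, partial_choice [set r] g.
Proof.
have [h h_fr] : exists h, h \in val (f r) by apply/set0Pn; exact: (valP (f r)).
exists (fun=> h); split=> [x|x y|x y]; rewrite ?inE.
- by move/eqP->.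
- by move=> /eqP-> /eqP->; rewrite (negbTE (loopless r)).
- by move=> /eqP-> /eqP->.
Qed.

Lemma partial_choice_extend (D : {set T}) (g : T -> H) (u d : T) (h : H) :
  partial_choice D g -> u \notin D -> d \in D -> uadj d u ->
  (forall d', d' \in D -> uadj u d' -> d' = d) -> h \in val (f u) ->
  (darc T d u -> darc H (g d) h) -> (darc T u d -> darc H h (g d)) ->
  partial_choice (u |: D) (fun z => if z == u then h else g z).
Proof.
move=> [g_f g_hom D_conn] u_D d_D d_u unique_d h_fu arc_du arc_ud.
have D_sub : subrel (induced (uadj (G:=T)) D) (induced (uadj (G:=T)) (u |: D)).
  by move=> x y /and3P[x_D y_D xy]; rewrite /induced /= !in_setU1 x_D y_D xy !orbT.
have conn_D x y : x \in D -> y \in D -> connect (induced (uadj (G:=T)) (u |: D)) x y.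
  move=> x_D y_D; move: (D_conn x y x_D y_D); apply: connect_sub => a b ab.
  exact/connect1/D_sub.
have d_u' : induced (uadj (G:=T)) (u |: D) d u.
  by rewrite /induced /= !in_setU1 eqxx d_D d_u !orbT.
have u_d' : induced (uadj (G:=T)) (u |: D) u d.
  by rewrite /induced /= !in_setU1 eqxx d_D uadj_sym d_u !orbT.
split=> [x|x y|x y]; rewrite ?in_setU1.
- by case: eqP => [->|_ /= /g_f].
- have [->|x_u] := eqVneq x u; have [->|y_u] := eqVneq y u => //=.
  + by rewrite (negbTE (loopless u)).
  + move=> _ y_D u_y; have y_d : y = d by apply: unique_d; rewrite // /uadj u_y.
    by move: u_y; rewrite y_d => /arc_ud.
  + move=> x_D _ x_u'; have x_d : x = d by apply: unique_d; rewrite // /uadj x_u' orbT.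
    by move: x_u'; rewrite x_d => /arc_du.
  + exact: g_hom.
- have [->|x_u] := eqVneq x u; have [->|y_u] := eqVneq y u => //= x_D y_D.
  + exact: connect_trans (connect1 u_d') (conn_D _ _ d_D y_D).
  + exact: connect_trans (conn_D _ _ x_D d_D) (connect1 d_u').
  + exact: conn_D.
Qed.

Hypothesis antisymmetric : forall u v : T, darc T u v -> ~~ darc T v u.

Lemma neighbour_value (d u : T) (a : H) : uadj d u -> a \in val (f d) ->
  exists h, [/\ h \in val (f u), darc T d u -> darc H a h & darc T u d -> darc H h a].
Proof.
case/orP=> [du|ud] a_fd.
- have [h h_fu a_h] := power_arc_succ (f_hom du) a_fd.
  by exists h; split=> // ud; rewrite (negbTE (antisymmetric du)) in ud.
- have [h h_fu h_a] := power_arc_pred (f_hom ud) a_fd.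
  by exists h; split=> // du; rewrite (negbTE (antisymmetric du)) in ud.
Qed.

Hypothesis connected : forall u v : T, connect (uadj (G:=T)) u v.
Hypothesis acyclic :
  forall s : seq T, 3 <= size s -> uniq s -> ~~ cycle (uadj (G:=T)) s.

(* Partial choices exist on connected sets of every size up to #|T|: a
   vertex outside D is reached by a path, which leaves D along an edge d u. *)
Lemma partial_choice_grow (n : nat) :
  n < #|T| -> exists (D : {set T}) (g : T -> H), #|D| = n.+1 /\ partial_choice D g.
Proof.
elim: n => [T_ne|n IH n_lt].
  have [r _] := card_gt0P T_ne; have [g choice_g] := partial_choice1 r.
  by exists [set r], g; rewrite cards1.
have [D [g [card_D choice_g]]] := IH (ltnW n_lt).
have [x x_D] : exists x, x \notin D.
  have : 0 < #|~: D| by rewrite -(leq_add2l #|D|) cardsC card_D addn1.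
  by case/card_gt0P=> x; rewrite inE; exists x.
have [y y_D] : exists y, y \in D by apply/card_gt0P; rewrite card_D.
case/connectP: (connected y x) => p y_p x_last.
have [d [u [d_D u_D d_u]]] : exists d u, [/\ d \in D, u \notin D & uadj d u].
  by apply: exit_edge y_D y_p _; rewrite -x_last.
have [g_f _ D_conn] := choice_g.
have [h [h_fu arc_du arc_ud]] := neighbour_value d_u (g_f d d_D).
exists (u |: D), (fun z => if z == u then h else g z).
split; first by rewrite cardsU1 u_D card_D.
apply: (partial_choice_extend (d := d)) => // d' d'_D u_d'.
by apply: acyclic_attach_unique acyclic D_conn u_D d_D d'_D _ u_d'; rewrite uadj_sym.
Qed.
End TreeToPowerGraph.

Lemma tree_to_power_graph (T H : digraph) :
  oriented_tree T -> hom T (power_graph H) -> hom T H.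
Proof.
move=> [T_ne loopless antisym connected acyclic] [f f_hom].
have [|D [g [card_D [_ g_hom _]]]] := partial_choice_grow f_hom loopless antisym
  connected acyclic (n := #|T|.-1); first by rewrite prednK.
have D_full : D = [set: T].
  by apply/eqP; rewrite eqEcard subsetT cardsT card_D (prednK T_ne) leqnn.
by exists g => u v; apply: g_hom; rewrite D_full.
Qed.

Lemma hom_refl (G : digraph) : hom G G.
Proof. by exists id. Qed.

Lemma hom_trans (G1 G2 G3 : digraph) : hom G1 G2 -> hom G2 G3 -> hom G1 G3.
Proof. by move=> [f f_hom] [g g_hom]; exists (g \o f) => u v /f_hom/g_hom. Qed.

(* With tree duality, P(H) -> H: otherwise an obstruction tree F maps to
   P(H), hence to H, and then F itself cannot be an obstruction. *)
Lemma tree_duality_power_hom (H : digraph) :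
  tree_duality H -> hom (power_graph H) H.
Proof.
case=> Fs [Fs_trees obstr]; apply/obstr => -[F [F_Fs F_PH]].
have F_H := tree_to_power_graph (Fs_trees F F_Fs) F_PH.
by apply: ((obstr F).1 F_H); exists F; split; last exact: hom_refl.
Qed.

(* P(H) -> H implies P(δH) -> δH: a set X of arcs is sent to the arc
   (φ(tails X), φ(heads X)), and X -> Y in P(δH) forces heads X = tails Y. *)
Section ArcGraphPowerHom.
Variables (H : digraph) (phi : power_graph H -> H).
Hypothesis phi_hom : forall X Y, darc _ X Y -> darc H (phi X) (phi Y).

Lemma endpoints_nonempty (pr : H * H -> H) (X : power_graph (arc_graph H)) :
  [set pr (val a) | a in val X] != set0.
Proof. by rewrite imset_eq0; exact: (valP X). Qed.

Definition endpoints (pr : H * H -> H) (X : power_graph (arc_graph H)) :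
  power_graph H := exist (fun A : {set H} => A != set0) _ (endpoints_nonempty pr X).

Lemma tails_heads_arc (X : power_graph (arc_graph H)) :
  darc _ (endpoints fst X) (endpoints snd X).
Proof.
apply/andP; split; apply/forall_inP => _ /imsetP[a a_X ->]; apply/exists_inP.
- by exists (val a).2; [apply/imsetP; exists a | exact: valP a].
- by exists (val a).1; [apply/imsetP; exists a | exact: valP a].
Qed.

(* An arc X -> Y of P(δH) matches every head in X with a tail in Y and
   vice versa; as arcs of δH are concatenable pairs, heads X = tails Y. *)
Lemma power_arc_heads_tails (X Y : power_graph (arc_graph H)) :
  darc _ X Y -> endpoints snd X = endpoints fst Y.
Proof.
move=> XY; apply: val_inj; apply/setP => z /=; apply/imsetP/imsetP => -[c c_Z ->].
- by have [b b_Y /eqP ->] := power_arc_succ XY c_Z; exists b.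
- by have [a a_X /eqP <-] := power_arc_pred XY c_Z; exists a.
Qed.

Definition arc_choice (X : power_graph (arc_graph H)) : arc_graph H :=
  exist (fun p : H * H => darc H p.1 p.2)
    (phi (endpoints fst X), phi (endpoints snd X)) (phi_hom (tails_heads_arc X)).

Lemma arc_choice_hom (X Y : power_graph (arc_graph H)) :
  darc _ X Y -> darc _ (arc_choice X) (arc_choice Y).
Proof. by move=> XY; rewrite /= (power_arc_heads_tails XY). Qed.
End ArcGraphPowerHom.

Lemma arc_graph_power_hom (H : digraph) :
  hom (power_graph H) H -> hom (power_graph (arc_graph H)) (arc_graph H).
Proof. by case=> phi phi_hom; exists (arc_choice phi_hom); apply: arc_choice_hom. Qed.

Definition oriented (T : Type) (e : rel T) (b : bool) : rel T :=
  fun x y => if b then e x y else e y x.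

Fixpoint bounded_seqs (T : finType) (n : nat) : seq (seq T) :=
  if n is n'.+1 then [::] :: [seq x :: s | x <- enum T, s <- bounded_seqs T n']
  else [:: [::]].
Arguments bounded_seqs : clear implicits.

Lemma mem_bounded_seqs (T : finType) (n : nat) (s : seq T) :
  (s \in bounded_seqs T n) = (size s <= n).
Proof.
elim: n s => [|n IH] [|x s] //=; rewrite in_cons /= ltnS -IH.
apply/allpairsP/idP => [[[y t] /= [_ t_n [_ ->]]] //|s_n].
by exists (x, s); rewrite mem_enum.
Qed.

(* Its vertices are the oriented
   walks in G starting at v of length at most n, written as lists of steps
   (b, y), most recent first: b tells whether the arc to y is traversed
   forwards. *)
Section Unfolding.
Variable G : digraph.

Definition step := (bool * G)%type.

Definition walk_end (v : G) (s : seq step) : G := if s is (_, y) :: _ then y else v.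

Fixpoint walk_from (v : G) (s : seq step) : bool :=
  if s is (b, y) :: s' then walk_from v s' && oriented (darc G) b (walk_end v s') y
  else true.

Definition walks (n : nat) (v : G) : seq (seq step) :=
  [seq s <- bounded_seqs step n | walk_from v s].

Lemma mem_walks n v s : (s \in walks n v) = walk_from v s && (size s <= n).
Proof. by rewrite mem_filter mem_bounded_seqs. Qed.

(* x -> y when y extends x by a forward step, or x extends y by a backward
   step. *)
Definition unfold_arc (x y : seq step) : bool :=
  (if y is (b, _) :: y' then b && (y' == x) else false) ||
  (if x is (b, _) :: x' then ~~ b && (x' == y) else false).

Definition unfolding (n : nat) (v : G) : digraph :=
  @Digraph (seq_sub (walks n v)) (fun x y => unfold_arc (ssval x) (ssval y)).

Lemma nil_walk n v : [::] \in walks n v.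
Proof. by rewrite mem_walks. Qed.

Definition unfolding_root n v : unfolding n v := SeqSub (nil_walk n v).

Lemma unfold_arc_parent x y : unfold_arc x y ->
  (x = behead y /\ size x < size y) \/ (y = behead x /\ size y < size x).
Proof.
case/orP.
- by case: y => [//|[b z] y'] /andP[_ /eqP <-]; left.
- by case: x => [//|[b z] x'] /andP[_ /eqP <-]; right.
Qed.

(* No pair of opposite arcs: they would make each walk extend the other. *)
Lemma unfold_arc_antisym x y : unfold_arc x y -> ~~ unfold_arc y x.
Proof.
have no_swap (p q : seq step) a c : p = a :: q -> q = c :: p -> False.
  by move=> -> /(f_equal size) /= /eqP; rewrite -addn2 -{1}[size q]addn0 eqn_add2l.
rewrite /unfold_arc; case: x => [|[b z] x]; case: y => [|[c t] y] //=.
- by case: c.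
- by case: b.
- case: b; case: c; rewrite /= ?andbF ?orbF // => /eqP E; apply/negP => /eqP.
  + exact: no_swap E.
  + exact: no_swap E.
Qed.

Lemma unfolding_hom n v : hom (unfolding n v) G.
Proof.
exists (fun x => walk_end v (ssval x)) => -[x x_w] [y y_w] /=.
rewrite !mem_walks in x_w y_w; case/andP: x_w => x_w _; case/andP: y_w => y_w _.
case/orP.
- case: y y_w => [//|[b z] y'] /= /andP[_ y_arc] /andP[b_t /eqP <-].
  by rewrite b_t in y_arc.
- case: x x_w => [//|[b z] x'] /= /andP[_ x_arc] /andP[/negbTE b_f /eqP <-].
  by rewrite b_f in x_arc.
Qed.

Lemma behead_walk n v s : s \in walks n v -> behead s \in walks n v.
Proof.
rewrite !mem_walks; case: s => [//|[b z] s] /= /andP[/andP[-> _] s_n].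
exact: ltnW.
Qed.

Definition unfolding_parent n v (x : unfolding n v) : unfolding n v :=
  SeqSub (behead_walk (ssvalP x)).

(* Unfoldings are oriented trees: every vertex is joined to the root by
   dropping steps, and edges only join a walk to its parent. *)
Lemma unfolding_tree n v : oriented_tree (unfolding n v).
Proof.
have to_root (x : unfolding n v) : connect (uadj (G:=unfolding n v)) x (unfolding_root n v).
  case: x => x; elim: x => [|[b z] x IH] x_w.
    by rewrite (_ : SeqSub x_w = unfolding_root n v) //; apply: val_inj.
  apply: connect_trans (IH (behead_walk x_w)); apply: connect1.
  by case: b x_w => x_w; rewrite /uadj /= /unfold_arc /= eqxx ?orbT.
split.
- by apply/card_gt0P; exists (unfolding_root n v).
- by move=> x; apply/negP => /unfold_arc_parent[] [_]; rewrite ltnn.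
- by move=> x y; apply: unfold_arc_antisym.
- move=> x y; apply: connect_trans (to_root x) _.
  by rewrite (sym_connect_sym (@uadj_sym _)) to_root.
- apply: (@parent_rank_acyclic (unfolding n v) (fun x => size (ssval x))
    (@unfolding_parent n v)) => x y /orP[] /unfold_arc_parent
    [[E lt]|[E lt]]; [right|left|left|right]; split=> //; exact: val_inj.
Qed.

Lemma walks_widen m n v s : m <= n -> s \in walks m v -> s \in walks n v.
Proof. by move=> mn; rewrite !mem_walks => /andP[-> /leq_trans]; apply. Qed.

(* Walks from w become walks from v by prepending the step from v to w
   (stored at the end of the list, being the oldest step). *)
Lemma walk_prepend b v w s : oriented (darc G) b v w ->
  walk_from v (s ++ [:: (b, w)]) = walk_from w s /\
  walk_end v (s ++ [:: (b, w)]) = walk_end w s.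
Proof.
by move=> vw; elim: s => [|[c z] s [IH1 IH2]] /=; rewrite ?vw // IH1 IH2.
Qed.

Lemma walks_prepend b v w n s : oriented (darc G) b v w ->
  s \in walks n w -> s ++ [:: (b, w)] \in walks n.+1 v.
Proof.
move=> vw; rewrite !mem_walks => /andP[s_w s_n].
by rewrite (walk_prepend s vw).1 s_w size_cat addn1 ltnS.
Qed.

Lemma unfold_arc_prepend x y t : unfold_arc x y -> unfold_arc (x ++ t) (y ++ t).
Proof.
case/orP.
- by case: y => [//|[b z] y'] /andP[b_t /eqP <-]; rewrite /unfold_arc /= b_t eqxx.
- by case: x => [//|[b z] x'] /andP[b_f /eqP <-]; rewrite /unfold_arc /= b_f eqxx orbT.
Qed.
End Unfolding.

Lemma uniform_bound (K : finType) (Q : K -> nat -> Prop) :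
  (forall k m n, m <= n -> Q k m -> Q k n) -> (forall k, exists n, Q k n) ->
  exists N, forall k, Q k N.
Proof.
move=> Q_mono Q_ev.
suff [N QN] : exists N, forall k, k \in enum K -> Q k N.
  by exists N => k; apply: QN; rewrite mem_enum.
elim: (enum K) => [|a l [N QN]]; first by exists 0.
have [n Qn] := Q_ev a; exists (maxn n N) => k /predU1P[->|k_l].
- by apply: Q_mono Qn; rewrite leq_maxl.
- by apply: Q_mono (QN k k_l); rewrite leq_maxr.
Qed.

Definition asbool (P : Prop) : bool :=
  if excluded_middle_informative P then true else false.

Lemma asboolP (P : Prop) : reflect P (asbool P).
Proof. by rewrite /asbool; case: excluded_middle_informative => p; constructor. Qed.

(* To a vertex v of G we assign the set of
   vertices k of K such that every unfolding tree of G at v maps to K with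
   its root sent to k. *)
Section SurvivorSets.
Variables G K : digraph.

Definition rooted_hom (n : nat) (v : G) (k : K) : Prop :=
  exists phi : unfolding n v -> K,
    (forall x y, darc _ x y -> darc K (phi x) (phi y)) /\ phi (unfolding_root n v) = k.

Lemma rooted_hom_le m n v k : m <= n -> rooted_hom n v k -> rooted_hom m v k.
Proof.
move=> mn [phi [phi_hom phi_root]].
exists (fun x => phi (SeqSub (walks_widen mn (ssvalP x)))); split.
  by move=> x y xy; apply: phi_hom.
by rewrite -phi_root; congr phi; apply: val_inj.
Qed.

(* The depth N.+1 unfolding at v contains the depth N unfolding at a
   neighbour w, hanging from a child of the root. *)
Lemma rooted_hom_step b v w N k : oriented (darc G) b v w -> rooted_hom N.+1 v k ->
  exists k', rooted_hom N w k' /\ oriented (darc K) b k k'.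
Proof.
move=> vw [phi [phi_hom phi_root]].
pose psi (x : unfolding N w) := phi (SeqSub (walks_prepend vw (ssvalP x))).
exists (psi (unfolding_root N w)); split.
  by exists psi; split => // x y xy; apply: phi_hom; apply: unfold_arc_prepend.
rewrite -phi_root /psi; move: (walks_prepend vw _); clear psi vw.
by case: b => root_w; apply: phi_hom; rewrite /= /unfold_arc /=.
Qed.

Definition survivors (v : G) : {set K} :=
  [set k | asbool (forall n, rooted_hom n v k)].

Hypothesis trees_to_K : forall T, oriented_tree T -> hom T G -> hom T K.

(* Nonemptiness by compactness: if each k failed at some depth, all k would
   fail at a common depth N, yet the unfolding of depth N maps to K. *)
Lemma survivors_nonempty v : survivors v != set0.
Proof.
apply/set0Pn; apply: NNPP => none.
have fails k : exists n, ~ rooted_hom n v k.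
  apply: not_all_ex_not => all_n; apply: none; exists k.
  by rewrite inE; apply/asboolP.
have [N failN] := uniform_bound (fun k m n mn fm fn => fm (rooted_hom_le mn fn)) fails.
have [phi phi_hom] := trees_to_K (unfolding_tree N v) (unfolding_hom N v).
by apply: (failN (phi (unfolding_root N v))); exists phi.
Qed.

Lemma survivors_step b v w k : oriented (darc G) b v w -> k \in survivors v ->
  exists2 k', k' \in survivors w & oriented (darc K) b k k'.
Proof.
move=> vw; rewrite inE => /asboolP k_surv; apply: NNPP => none.
have fails k' : exists n, oriented (darc K) b k k' -> ~ rooted_hom n w k'.
  have [kk'|] := boolP (oriented (darc K) b k k'); last by exists 0.
  have [n not_n] : exists n, ~ rooted_hom n w k'.
    apply: not_all_ex_not => all_n; apply: none; exists k' => //.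
    by rewrite inE; apply/asboolP.
  by exists n.
have [N failN] := uniform_bound
  (fun k' m n mn fm kk' fn => fm kk' (rooted_hom_le mn fn)) fails.
have [k' [k'_N kk']] := rooted_hom_step vw (k_surv N.+1).
exact: failN kk' k'_N.
Qed.

Definition survivor_set (v : G) : power_graph K :=
  exist (fun A : {set K} => A != set0) _ (survivors_nonempty v).

Lemma survivor_set_hom v w : darc G v w -> darc _ (survivor_set v) (survivor_set w).
Proof.
move=> vw; apply/andP; split; apply/forall_inP => k k_surv; apply/exists_inP.
- by have [k' ? ?] := survivors_step (b := true) vw k_surv; exists k'.
- by have [k' ? ?] := survivors_step (b := false) vw k_surv; exists k'.
Qed.
End SurvivorSets.

Lemma hom_of_tree_homs (G K : digraph) :
  hom (power_graph K) K -> (forall T, oriented_tree T -> hom T G -> hom T K) ->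
  hom G K.
Proof.
move=> PK_K trees_to_K; apply: hom_trans PK_K.
by exists (survivor_set trees_to_K); apply: survivor_set_hom.
Qed.

Lemma power_hom_tree_duality (K : digraph) :
  hom (power_graph K) K -> tree_duality K.
Proof.
move=> PK_K; exists (fun F => oriented_tree F /\ ~ hom F K).
split=> [F []//|G]; split.
- by move=> G_K [F [[_ F_K] F_G]]; apply: F_K; apply: hom_trans G_K.
- move=> no_obstr; apply: hom_of_tree_homs PK_K _ => T T_tree T_G.
  by apply: NNPP => T_K; apply: no_obstr; exists T.
Qed.

Theorem corollary2p4 (H : digraph) :
  tree_duality H -> tree_duality (arc_graph H).
Proof.
move=> /tree_duality_power_hom PH_H.
exact/power_hom_tree_duality/arc_graph_power_hom.
Qed.
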